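(* Fix $0<\delta<1$ and let $\epsilon=\frac12+\frac\delta2$, $\epsilon'=\frac12$, $c=\frac8\delta$. Then for even $n$, $|\mathcal G_n|\ge 2^{\Omega(n^{2-\epsilon}\log n)}$.
   Context: For even $n$, a good graph on $n$ vertices is a bipartite graph with vertex set $[n]$ and parts $\{1,\dots,\frac n2\}$ and $\{\frac n2+1,\dots,n\}$, having exactly $\lfloor(\frac n2)^{2-\epsilon}\rfloor$ edges, such that every induced subgraph with at most $(\frac n2)^{\epsilon'}$ vertices has a vertex of degree less than $c$ (within that subgraph). $\mathcal G_n$ denotes the set of good graphs on $n$ vertices. *)

From HB Require Import structures.
From mathcomp Require Import all_boot all_order all_algebra.
From mathcomp Require Import all_classical all_reals.
From mathcomp Require Import exp.
Set Implicit Arguments. Unset Strict Implicit. Unset Printing Implicit Defensive.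
Import Order.TTheory GRing.Theory Num.Theory.
Local Open Scope ring_scope.

(* Vertices [n] are encoded as 'I_n = {0,...,n-1} (vertex k+1 of the paper is k).
   Left part: indices < n/2; right part: indices >= n/2.
   A bipartite graph with these parts is encoded by its edge set
   E : {set 'I_n * 'I_n}, each edge stored once as (left endpoint, right endpoint). *)

Definition bip_edges (n : nat) (E : {set 'I_n * 'I_n}) : bool :=
  [forall e in E, (e.1 < n./2)%N && (n./2 <= e.2)%N].

Definition adj (n : nat) (E : {set 'I_n * 'I_n}) (u v : 'I_n) : bool :=
  ((u, v) \in E) || ((v, u) \in E).

Definition deg_in (n : nat) (E : {set 'I_n * 'I_n}) (S : {set 'I_n}) (v : 'I_n) : nat :=
  #|[set u in S | adj E u v]|.

Definition good_graph (R : realType) (eps eps' c : R) (n : nat)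
    (E : {set 'I_n * 'I_n}) : bool :=
  [&& bip_edges E,
      (#|E|%:Z == Num.floor ((n./2)%:R `^ (2 - eps)))
    & [forall S : {set 'I_n},
        ((S != finset.set0) && ((#|S|)%:R <= (n./2)%:R `^ eps'))
          ==> [exists v in S, (deg_in E S v)%:R < c]]].

Definition good_graphs (R : realType) (eps eps' c : R) (n : nat)
    : {set {set 'I_n * 'I_n}} :=
  [set E | good_graph eps eps' c E].

From HB Require Import structures.
From mathcomp Require Import all_boot all_order all_algebra.
From mathcomp Require Import all_classical all_reals.
From mathcomp Require Import exp sequences.
From mathcomp Require Import zify ring lra.
Set Implicit Arguments.
Unset Strict Implicit.
Unset Printing Implicit Defensive.

Import Order.TTheory GRing.Theory Num.Theory.
Local Open Scope ring_scope.

(* Write n = 2N, a = 2 - eps = 3/2 - delta/2 and m = floor(N^a), and consider the C(N^2, m)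
   bipartite graphs with m edges between the two halves.  A graph that is not good contains a set
   S of s vertices, 8 < s <= sqrt N, spanning t >= c s / 2 = 4 s / delta edges.  A fixed t-edge set
   lies in at most C(N^2, m) d^t of the graphs, where d = m / N^2 satisfies s d <= N^(-delta/2);
   so for each t the t-edge subsets of S x S lie in at most
     C(N^2, m) C(s^2, t) d^t <= C(N^2, m) (4 s^2 d / t)^t <= C(N^2, m) N^(-2 s)
   graphs.  Summing over t <= N and over the at most (2N)^s sets S of size s shows that at most
   half of the m-edge graphs are not good.  Hence
     |G_n| >= C(N^2, m) / 2 >= (N^2 / m)^m / 2 >= N^(m/2) / 2 = 2^Omega(n^a log n). *)

Lemma ffact_leq_exp (n k : nat) : (n ^_ k <= n ^ k)%N.
Proof.
elim: k => [|k IH]; first by rewrite ffactn0 expn0.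
by rewrite ffactnSr expnSr leq_mul // leq_subr.
Qed.

Lemma bin_leq_exp (n k : nat) : ('C(n, k) <= n ^ k)%N.
Proof.
rewrite (leq_trans _ (ffact_leq_exp n k)) // -bin_ffact.
by rewrite leq_pmulr // fact_gt0.
Qed.

Lemma bin_ffact_sub (M m k : nat) : (k <= m)%N ->
  ('C(M, m) * m ^_ k = 'C(M - k, m - k) * M ^_ k)%N.
Proof.
elim: k => [|k IH] lekm; first by rewrite !ffactn0 !subn0.
rewrite !ffactnSr mulnA IH; last by lia.
have -> : (m - k = (m - k.+1).+1)%N by lia.
have binS := mul_bin_diag (M - k) (m - k.+1).
rewrite (_ : (M - k).-1 = M - k.+1)%N in binS; last by lia.
rewrite mulnAC [X in (X * _)%N]mulnC -binS.
ring.
Qed.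

Lemma ffact_exp_leq (M m k : nat) : (m <= M)%N ->
  (m ^_ k * M ^ k <= M ^_ k * m ^ k)%N.
Proof.
move=> lemM; elim: k => [|k IH]; first by rewrite !ffactn0 !expn0.
have step : ((m - k) * M <= (M - k) * m)%N.
  by case: (leqP m k) => [lemk|_]; nia.
rewrite !ffactnSr !expnSr.
rewrite (_ : _ * _ * _ = (m ^_ k * M ^ k) * ((m - k) * M))%N; last by ring.
rewrite [X in (_ <= X)%N](_ : _ = (M ^_ k * m ^ k) * ((M - k) * m))%N; last by ring.
exact: leq_mul.
Qed.

Lemma bin_sub_exp_leq (M m k : nat) : (k <= m)%N -> (m <= M)%N ->
  ('C(M - k, m - k) * M ^ k <= 'C(M, m) * m ^ k)%N.
Proof.
move=> lekm lemM.
have ffact_gt0 : (0 < M ^_ k)%N by rewrite ffact_gt0; lia.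
rewrite -(leq_pmul2r ffact_gt0) mulnAC -bin_ffact_sub // -!mulnA leq_mul2l.
by rewrite [(m ^ k * _)%N]mulnC ffact_exp_leq ?orbT.
Qed.

Lemma exp_leq_bin_exp (M m : nat) : (m <= M)%N -> (M ^ m <= 'C(M, m) * m ^ m)%N.
Proof.
move=> lemM; have := @ffact_exp_leq _ _ m lemM.
rewrite ffactnn -bin_ffact => le_fact.
by rewrite -(leq_pmul2l (fact_gt0 m)) mulnCA mulnA.
Qed.

Section RealEstimates.
Variable R : realType.

Lemma expR1_le4 : expR (1 : R) <= 4.
Proof.
have half_le : expR (1/2 : R) <= 2.
  have := expR_ge1Dx (- (1/2) : R); rewrite expRN.
  have := expR_gt0 (1/2 : R); set y := expR _ => y_gt0.
  move/(ler_wpM2r (ltW y_gt0)); rewrite mulVf ?gt_eqF //; lra.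
rewrite (_ : 1 = 1/2 + 1/2); last by lra.
by rewrite expRD; have := expR_gt0 (1/2 : R); nra.
Qed.

Lemma exp_div_fact_le_expR (x : R) (t : nat) : 0 <= x -> x ^+ t / t`!%:R <= expR x.
Proof.
move=> x_ge0; case: t => [|t].
  by rewrite expr0 fact0 divr1 -expR0 ler_expR.
have := expR_ge1Dxn t x_ge0; lra.
Qed.

Lemma natr_exp_le_fact (t : nat) : (t%:R : R) ^+ t <= 4 ^+ t * t`!%:R.
Proof.
have fact_gt0 : 0 < t`!%:R :> R by rewrite ltr0n fact_gt0.
have := exp_div_fact_le_expR t (ler0n R t); rewrite ler_pdivrMr //.
move/le_trans; apply; apply: ler_wpM2r; first exact: ltW.
rewrite -[t%:R]mulr1 expRM_natl.
by apply: lerXn2r; rewrite ?nnegrE ?expR_ge0 ?expR1_le4.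
Qed.

(* [C(q, t) <= (e q / t)^t] with [e <= 4]. *)
Lemma bin_exp_le (q t : nat) (x : R) : (0 < t)%N -> 0 <= x ->
  'C(q, t)%:R * x ^+ t <= (4 * q%:R * x / t%:R) ^+ t.
Proof.
move=> t_gt0 x_ge0.
have tt_gt0 : 0 < (t%:R : R) ^+ t by rewrite exprn_gt0 // ltr0n.
have bin_fact : 'C(q, t)%:R * t`!%:R <= (q%:R : R) ^+ t.
  by rewrite -natrM -natrX ler_nat bin_ffact ffact_leq_exp.
rewrite expr_div_n ler_pdivlMr // !exprMn [X in X <= _]mulrAC.
apply: ler_wpM2r; first exact: exprn_ge0.
apply: le_trans (_ : 'C(q, t)%:R * (4 ^+ t * t`!%:R) <= _).
  by apply: ler_wpM2l; rewrite ?natr_exp_le_fact.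
by rewrite mulrCA; apply: ler_wpM2l; rewrite ?exprn_ge0.
Qed.

End RealEstimates.

Lemma card_bigcup_leq (I T : finType) (P : pred I) (X : I -> {set T}) :
  (#|\bigcup_(i | P i) X i| <= \sum_(i | P i) #|X i|)%N.
Proof.
elim/big_rec2: _ => [|i A k _ IH]; first by rewrite cards0.
by rewrite (leq_trans (leq_card_setU _ _)) // leq_add2l.
Qed.

Lemma sum_subsets_by_card (R : realType) (T : finType) (B : {set T})
    (P : pred nat) (F : nat -> R) :
  \sum_(X : {set T} | (X \subset B) && P #|X|) F #|X| =
  \sum_(t < #|B|.+1 | P t) 'C(#|B|, t)%:R * F t.
Proof.
have card_lt (X : {set T}) : X \subset B -> (#|X| < #|B|.+1)%N.
  by move=> subXB; rewrite ltnS subset_leq_card.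
rewrite (partition_big (fun X : {set T} => inord #|X| : 'I_#|B|.+1) (fun t => P t)) /=;
  last by move=> X /andP[subXB PX]; rewrite inordK ?card_lt.
apply: eq_bigr => t Pt; rewrite -cards_draws mulr_natl -sumr_const.
apply: eq_big => [X|X /andP[/andP[subXB _] /eqP <-]]; last by rewrite inordK ?card_lt.
rewrite inE; apply/andP/andP => [[/andP[subXB _] /eqP <-]|[subXB /eqP cardX]].
  by rewrite inordK ?card_lt.
by rewrite subXB cardX Pt; split=> //; apply/eqP/val_inj; rewrite /= inordK.
Qed.

Lemma ratio_exp_le_bin (R : realType) (M m : nat) : (m <= M)%N ->
  (M%:R / m%:R) ^+ m <= 'C(M, m)%:R :> R.
Proof.
move=> le_mM; have [->|m_gt0] := posnP m; first by rewrite expr0 bin0.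
have mm_pos : 0 < m%:R ^+ m :> R by rewrite exprn_gt0 // ltr0n.
by rewrite expr_div_n ler_pdivrMr // -!natrX -natrM ler_nat exp_leq_bin_exp.
Qed.

Lemma ln2_le1 (R : realType) : ln (2 : R) <= 1.
Proof.
rewrite -[X in _ <= X](expRK 1) ler_ln ?posrE ?expR_gt0 //.
by have := expR_ge1Dx (1 : R); lra.
Qed.

Lemma ln_ge1 (R : realType) (x : R) : 4 <= x -> 1 <= ln x.
Proof.
move=> x_ge4; rewrite -[X in X <= _](expRK 1) ler_ln ?posrE ?expR_gt0 //.
  by apply: le_trans x_ge4; apply: expR1_le4.
by lra.
Qed.

Lemma card_setI_setX (I : finType) (A : {set I * I}) (S : {set I}) :
  #|A :&: finset.setX S S| = (\sum_(v in S) #|[set u in S | (u, v) \in A]|)%N.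
Proof.
have -> : #|A :&: finset.setX S S| =
    (\sum_u \sum_v [&& (u, v) \in A, u \in S & v \in S])%N.
  rewrite pair_big /= -sum1_card big_mkcond /=.
  by apply: (@eq_bigr nat) => -[u v] _; rewrite !inE; case: and3P.
rewrite exchange_big [RHS]big_mkcond /=; apply: (@eq_bigr nat) => v _.
case: (boolP (v \in S)) => Sv; last by apply: (@big1 nat) => u _; rewrite !andbF.
rewrite -sum1_card [RHS]big_mkcond /=; apply: (@eq_bigr nat) => u _.
by rewrite !inE andbT andbC.
Qed.

Lemma sum_deg_in_leq (n : nat) (E : {set 'I_n * 'I_n}) (S : {set 'I_n}) :
  (\sum_(v in S) deg_in E S v <= 2 * #|E :&: finset.setX S S|)%N.
Proof.
pose Et := [set e : 'I_n * 'I_n | (e.2, e.1) \in E].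
have card_Et : #|Et :&: finset.setX S S| = #|E :&: finset.setX S S|.
  have swapK : involutive (fun e : 'I_n * 'I_n => (e.2, e.1)) by case.
  rewrite -(card_preimset _ (inv_inj swapK)); apply: eq_card => -[u v].
  by rewrite !inE /= [(v \in S) && _]andbC.
have deg_split v : (deg_in E S v <=
    #|[set u in S | (u, v) \in E]| + #|[set u in S | (u, v) \in Et]|)%N.
  apply: leq_trans (leq_card_setU _ _); apply: subset_leq_card.
  by apply/fintype.subsetP => u; rewrite !inE /adj -andb_orr.
rewrite (leq_trans (leq_sum _ (fun v _ => deg_split v))) // big_split /=.
by rewrite -!card_setI_setX card_Et addnn mul2n.
Qed.

Section BipartiteGraphs.
Variable N : nat.
Local Notation n := (N + N)%N.

Definition complete_bip : {set 'I_n * 'I_n} :=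
  [set e : 'I_n * 'I_n | (e.1 < N)%N && (N <= e.2)%N].

Lemma card_complete_bip : #|complete_bip| = (N * N)%N.
Proof.
have -> : complete_bip = finset.setX (@lshift N N @: [set: 'I_N]) (@rshift N N @: [set: 'I_N]).
  apply/setP => -[u v]; rewrite !inE /=; congr andb.
    apply/idP/imsetP => [ltuN|[i _ ->]]; last exact: (ltn_ord i).
    by exists (Ordinal ltuN); rewrite ?finset.in_setT //; apply: val_inj.
  apply/idP/imsetP => [leNv|[i _ ->]]; last by rewrite /= leq_addr.
  have ltvN : (v - N < N)%N by have := ltn_ord v; lia.
  by exists (Ordinal ltvN); rewrite ?finset.in_setT //; apply: val_inj => /=; lia.
by rewrite cardsX !card_imset ?cardsT ?card_ord //; [exact: rshift_inj | exact: lshift_inj].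
Qed.

Variable m : nat.

Definition bip_graphs : {set {set 'I_n * 'I_n}} :=
  [set E : {set 'I_n * 'I_n} | (E \subset complete_bip) && (#|E| == m)].

Definition supergraphs (T : {set 'I_n * 'I_n}) : {set {set 'I_n * 'I_n}} :=
  [set E in bip_graphs | T \subset E].

Lemma card_bip_graphs : #|bip_graphs| = 'C(N * N, m).
Proof. by rewrite cards_draws card_complete_bip. Qed.

(* Removing [T] maps the supergraphs of [T] injectively to the [(m - #|T|)]-subsets of
   [complete_bip :\: T]. *)
Lemma card_supergraphs (T : {set 'I_n * 'I_n}) : (m <= N * N)%N ->
  (#|supergraphs T| * (N * N) ^ #|T| <= 'C(N * N, m) * m ^ #|T|)%N.
Proof.
rewrite -card_complete_bip => lemP.
have [E0|] := set_0Vmem (supergraphs T); first by rewrite E0 cards0.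
case=> E0; rewrite !inE => /andP[/andP[subE0P /eqP cardE0] subTE0].
have leTm : (#|T| <= m)%N by rewrite -cardE0 subset_leq_card.
have subTP : T \subset complete_bip := fintype.subset_trans subTE0 subE0P.
apply: leq_trans _ (@bin_sub_exp_leq _ _ _ leTm lemP); rewrite leq_mul2r; apply/orP; right.
have card_diff : #|complete_bip :\: T| = (#|complete_bip| - #|T|)%N.
  by rewrite cardsD (finset.setIidPr subTP).
rewrite -card_diff -cards_draws.
rewrite -(@card_in_imset _ _ (fun E => E :\: T) (supergraphs T)); last first.
  move=> E1 E2; rewrite !inE => /andP[_ subTE1] /andP[_ subTE2] eqD.
  by rewrite -(finset.setID E1 T) -(finset.setID E2 T) eqD !(finset.setIidPr _).
apply/subset_leq_card/fintype.subsetP => _ /imsetP[E + ->].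
rewrite !inE => /andP[/andP[subEP /eqP cardE] subTE].
by rewrite finset.setSD //= cardsD (finset.setIidPr subTE) cardE eqxx.
Qed.

End BipartiteGraphs.

Arguments supergraphs N m T : clear implicits.

(* [2 < s] holds for every witness (its degrees exceed [c > 8]); it makes the sum over
   witnesses in [sum_witness_le] geometric from [s = 3] on. *)
Definition small_card (N s : nat) : bool := (2 < s)%N && (s * s <= N)%N.

Definition dense_card (R : realType) (c : R) (s t : nat) : bool := c * s%:R / 2 <= t%:R.

Lemma sqr_le_sqrt (R : realType) (N s : nat) :
  ((s%:R : R) <= N%:R `^ (1/2)) = (s * s <= N)%N.
Proof.
have sqrt_sqr : (N%:R `^ (1/2)) ^+ 2 = N%:R :> R.
  rewrite -powR_mulrn ?powR_ge0 // -powRrM (_ : 1/2 * 2%:R = 1) ?powRr1 //; lra.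
by rewrite -ler_sqr ?nnegrE ?powR_ge0 // sqrt_sqr -natrX ler_nat mulnn.
Qed.

Lemma half_addnn (N : nat) : (N + N)./2 = N.
Proof. by rewrite addnn doubleK. Qed.

Lemma not_good_dense_witness (R : realType) (eps c : R) (N m : nat)
    (E : {set 'I_(N + N) * 'I_(N + N)}) :
  m%:Z = Num.floor (N%:R `^ (2 - eps)) -> 8 < c ->
  E \in bip_graphs N m -> ~~ good_graph eps (1/2) c E ->
  exists2 S : {set 'I_(N + N)}, small_card N #|S| &
    exists2 T : {set 'I_(N + N) * 'I_(N + N)},
      (T \subset finset.setX S S) && dense_card c #|S| #|T| & T \subset E.
Proof.
move=> m_floor c_gt8; rewrite inE => /andP[subEP /eqP cardE].
have bipE : bip_edges E.
  by apply/forall_inP => e /(fintype.subsetP subEP); rewrite inE half_addnn.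
rewrite /good_graph bipE half_addnn cardE m_floor eqxx /=.
case/forallPn => S; rewrite negb_imply => /andP[/andP[S0 cardS] /exists_inPn Sdeg].
have deg_ge v : v \in S -> c <= (deg_in E S v)%:R by move=> /Sdeg; rewrite -leNgt.
exists S.
  have [v Sv] := set0Pn _ S0.
  have deg_le : (deg_in E S v <= #|S|)%N.
    by apply/subset_leq_card/fintype.subsetP => u; rewrite inE => /andP[].
  have : c <= #|S|%:R by apply: le_trans (deg_ge v Sv) _; rewrite ler_nat.
  rewrite /small_card -(sqr_le_sqrt R) cardS andbT => c_le.
  by rewrite (@ltn_trans 8) // -(ltr_nat R); lra.
exists (E :&: finset.setX S S); last exact: subsetIl.
rewrite subsetIr /dense_card.
have : \sum_(v in S) c <= ((\sum_(v in S) deg_in E S v)%N%:R : R).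
  by rewrite natr_sum; apply: ler_sum => v; apply: deg_ge.
rewrite sumr_const -mulr_natr.
have : ((\sum_(v in S) deg_in E S v)%N%:R : R) <= (2 * #|E :&: finset.setX S S|)%N%:R.
  by rewrite ler_nat sum_deg_in_leq.
rewrite natrM; lra.
Qed.

Section FloorPower.
Variable R : realType.
Variables (a : R) (N m : nat).
Hypotheses (a_ge1 : 1 <= a) (a_le : a <= 3/2) (N_ge100 : (100 <= N)%N)
  (m_floor : m%:Z = Num.floor (N%:R `^ a)).

Local Notation x := (N%:R : R).

Let x_ge100 : 100 <= x. Proof. by rewrite ler_nat. Qed.

Lemma floor_pow_le : m%:R <= x `^ a.
Proof. by have := floor_le (x `^ a); rewrite -m_floor -pmulrn. Qed.

Lemma floor_pow_gt : x `^ a - 1 < m%:R.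
Proof.
have := floorD1_gt (x `^ a); rewrite -m_floor intrD -pmulrn; lra.
Qed.

Let m_gt0 : 0 < m%:R :> R.
Proof.
have := x_ge100 => x_ge; have x_le_pow : x <= x `^ a by apply: le1r_powR => //; lra.
by have := floor_pow_gt; lra.
Qed.

Lemma ln_half_le_ln_ratio : ln x / 2 <= ln (x ^+ 2 / m%:R).
Proof.
have := x_ge100 => x_ge; have m_pos := m_gt0.
have sqrt_le : x `^ (1/2) <= x ^+ 2 / m%:R.
  rewrite ler_pdivlMr //; apply: le_trans (_ : x `^ (1/2) * x `^ a <= _).
    by rewrite ler_wpM2l ?powR_ge0 ?floor_pow_le.
  rewrite -powRD; last by apply/implyP => _; rewrite gt_eqF //; lra.
  rewrite -powR_mulrn ?ler0n //.
  by apply: ler_powR; have := a_le; lra.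
have sqrt_pos : 0 < x `^ (1/2) by rewrite powR_gt0 //; lra.
have : ln (x `^ (1/2)) <= ln (x ^+ 2 / m%:R).
  by rewrite ler_ln ?posrE // (lt_le_trans sqrt_pos).
by rewrite ln_powR; lra.
Qed.

Lemma powR_ln_double_le : (2 * x) `^ a * ln (2 * x) <= 8 * (x `^ a * ln x).
Proof.
have := x_ge100 => x_ge; have lnx_ge1 : 1 <= ln x by apply: ln_ge1; lra.
have ln2x_le : ln (2 * x) <= 2 * ln x.
  by rewrite lnM ?posrE; [have := ln2_le1 R; lra | lra | lra].
have pow2_le : (2 : R) `^ a <= 4.
  have -> : (4 : R) = 2 `^ 2%:R by rewrite powR_mulrn; [ring | lra].
  by apply: ler_powR; have := a_le; lra.
have pow2x_le : (2 * x) `^ a <= 4 * x `^ a.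
  by rewrite powRM; [rewrite ler_wpM2r ?powR_ge0 | lra | lra].
rewrite (_ : 8 * _ = 4 * x `^ a * (2 * ln x)); last by ring.
by rewrite ler_pM ?powR_ge0 // ln_ge0 //; lra.
Qed.

Lemma exp2_le_ratio_pow :
  2 `^ (1/64 * ((N + N)%:R `^ a * ln (N + N)%:R)) <= (x ^+ 2 / m%:R) ^+ m / 2.
Proof.
have m_gt : x `^ a - 1 < m%:R := floor_pow_gt.
have := x_ge100 => x_ge; have m_pos := m_gt0.
have lnx_ge1 : 1 <= ln x by apply: ln_ge1; lra.
have ratio_pos : 0 < x ^+ 2 / m%:R.
  by rewrite divr_gt0 ?exprn_gt0 //; lra.
rewrite -ler_ln ?posrE ?powR_gt0 ?divr_gt0 ?exprn_gt0 //.
rewrite ln_powR ln_div ?posrE ?exprn_gt0 // lnXn //.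
have -> : (N + N)%:R = 2 * x :> R by rewrite natrD; ring.
have P_ge : 100 <= x `^ a by apply: le_trans (le1r_powR _ a_ge1); lra.
have ln2_pos : 0 < ln (2 : R) by rewrite ln_gt0 //; lra.
have lhs_le := powR_ln_double_le.
have lhs_ln2_le : (2 * x) `^ a * ln (2 * x) * ln 2 <= (2 * x) `^ a * ln (2 * x).
  by rewrite ler_piMr ?mulr_ge0 ?powR_ge0 ?ln2_le1 ?ln_ge0 //; lra.
have rhs_ge : (x `^ a - 1) * (ln x / 2) <= m%:R * ln (x ^+ 2 / m%:R).
  by rewrite ler_pM ?ln_half_le_ln_ratio ?ltW //; lra.
have PL_ge : 100 * ln x <= x `^ a * ln x by rewrite ler_wpM2r //; lra.
rewrite -[_ *+ m]mulr_natl; have := ln2_le1 R; lra.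
Qed.

End FloorPower.

Section CountNotGood.
Variable R : realType.
Variables (delta : R) (N m : nat).
Hypotheses (delta_gt0 : 0 < delta) (delta_lt1 : delta < 1) (N_ge100 : (100 <= N)%N)
  (m_floor : m%:Z = Num.floor (N%:R `^ (2 - (1/2 + delta/2)))) (m_le : (m <= N * N)%N).

Local Notation density := (m%:R / (N * N)%:R : R).

Let N_gt0 : (0 < N)%N. Proof. by rewrite (leq_trans _ N_ge100). Qed.

Lemma natr_mul_density_le (s : nat) : (s * s <= N)%N ->
  s%:R * density <= N%:R `^ (- (delta / 2)).
Proof.
move=> sqr_le.
have NN_gt0 : 0 < (N * N)%:R :> R by rewrite ltr0n muln_gt0 N_gt0.
have N_neq0 : N%:R != 0 :> R by rewrite pnatr_eq0 -lt0n.
rewrite mulrA ler_pdivrMr //.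
have -> : N%:R `^ (- (delta / 2)) * (N * N)%:R =
    N%:R `^ (1/2) * N%:R `^ (2 - (1 / 2 + delta / 2)) :> R.
  rewrite natrM -expr2 -powR_mulrn ?ler0n // -!powRD ?N_neq0 ?implybT //.
  by congr (_ `^ _); lra.
by apply: ler_pM => //; rewrite ?sqr_le_sqrt ?(floor_pow_le m_floor).
Qed.

(* From [t >= 4 s / delta]: [4 s^2 d / t <= s d <= N^(-delta/2)] and [N^(-delta t/2) <= N^(-2 s)]. *)
Lemma dense_term_le (s t : nat) : small_card N s -> dense_card (8 / delta) s t ->
  'C(s * s, t)%:R * density ^+ t <= (N%:R ^+ (2 * s))^-1 :> R.
Proof.
move=> /andP[s_gt2 sqr_le]; rewrite /dense_card => t_ge.
have s_ge3 : 3 <= s%:R :> R by rewrite ler_nat.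
have t_ge_s : 4 * s%:R <= t%:R * delta.
  have -> : 4 * s%:R = 8 / delta * s%:R / 2 * delta by field; rewrite gt_eqF.
  by rewrite ler_wpM2r // ltW.
have t_gt0 : (0 < t)%N by rewrite -(ltr0n R) -(pmulr_lgt0 _ delta_gt0); lra.
have density_ge0 : 0 <= density by rewrite divr_ge0.
apply: le_trans (bin_exp_le (s * s) t_gt0 density_ge0) _.
have base_le : 4 * (s * s)%:R * density / t%:R <= N%:R `^ (- (delta / 2)).
  have := natr_mul_density_le sqr_le.
  have := mulr_ge0 (ler0n R s) density_ge0.
  have := powR_ge0 (N%:R : R) (- (delta / 2)); have := ler0n R t.
  have : 4 * s%:R <= t%:R :> R.
    apply: le_trans t_ge_s _; rewrite -[X in _ <= X]mulr1.
    by apply: ler_wpM2l; [exact: ler0n | exact: ltW].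
  rewrite ler_pdivrMr ?ltr0n // !natrM.
  set y := N%:R `^ _; set d := m%:R / _; nra.
apply: le_trans (lerXn2r t _ _ base_le) _; rewrite ?nnegrE ?powR_ge0 ?divr_ge0 ?mulr_ge0 ?invr_ge0 //.
rewrite -powR_mulrn ?powR_ge0 // -powRrM -powR_invn ?ler0n //.
apply: ler_powR; first by rewrite ler1n.
by rewrite natrM; lra.
Qed.

Local Notation C := ('C(N * N, m)%:R : R).
Local Notation c := (8 / delta : R).
Local Notation vertices := {set 'I_(N + N)}.
Local Notation edges := {set 'I_(N + N) * 'I_(N + N)}.

Lemma card_supergraphs_le (T : edges) :
  #|supergraphs N m T|%:R <= C * density ^+ #|T|.
Proof.
have NN_pos : 0 < (N * N)%:R ^+ #|T| :> R by rewrite exprn_gt0 // ltr0n muln_gt0 N_gt0.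
rewrite expr_div_n mulrA ler_pdivlMr // -!natrX -!natrM ler_nat.
exact: card_supergraphs.
Qed.

Lemma sum_supergraphs_le (S : vertices) : small_card N #|S| ->
  \sum_(T : edges | (T \subset finset.setX S S) && dense_card c #|S| #|T|)
     #|supergraphs N m T|%:R
  <= (N.+1)%:R * C * (N%:R ^+ (2 * #|S|))^-1.
Proof.
move=> smallS; have /andP[_ sqrS_le] := smallS.
set b := C * (N%:R ^+ (2 * #|S|))^-1.
have b_ge0 : 0 <= b by rewrite mulr_ge0 ?invr_ge0 ?exprn_ge0.
apply: le_trans (ler_sum _ (fun T _ => card_supergraphs_le T)) _.
rewrite (sum_subsets_by_card _ (dense_card c #|S|) (fun t => C * density ^+ t)) cardsX.
apply: le_trans (_ : \sum_(t < (#|S| * #|S|).+1 | dense_card c #|S| t) b <= _).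
  apply: ler_sum => t denset; rewrite mulrCA ler_wpM2l //.
  exact: dense_term_le.
rewrite sumr_const -[b *+ _]mulr_natl -[X in _ <= X]mulrA -/b.
apply: ler_wpM2r => //.
by rewrite ler_nat (leq_trans (max_card _)) // card_ord ltnS.
Qed.

Lemma bin_double_div_le (s : nat) : (3 <= s)%N ->
  'C(N + N, s)%:R * (N%:R ^+ (2 * s))^-1 <= 8 / N%:R ^+ 3 :> R.
Proof.
move=> s_ge3.
have N_pos : 0 < N%:R :> R by rewrite ltr0n.
apply: le_trans (_ : (N + N)%:R ^+ s * (N%:R ^+ (2 * s))^-1 <= _).
  by rewrite ler_wpM2r ?invr_ge0 ?exprn_ge0 // -natrX ler_nat bin_leq_exp.
have -> : (N + N)%:R ^+ s * (N%:R ^+ (2 * s))^-1 = (2 / N%:R) ^+ s :> R.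
  rewrite natrD exprM -exprVn -exprMn; congr (_ ^+ _).
  by field; rewrite pnatr_eq0 -lt0n N_gt0.
have -> : 8 / N%:R ^+ 3 = (2 / N%:R) ^+ 3 :> R.
  by rewrite expr_div_n; congr (_ / _); ring.
apply: ler_wiXn2l => //; first by rewrite divr_ge0 ?ler0n.
have : 100 <= N%:R :> R by rewrite ler_nat; exact: N_ge100.
by rewrite ler_pdivrMr // mul1r; lra.
Qed.

Lemma sum_witness_le :
  \sum_(S : vertices | (S \subset [set: 'I_(N + N)]) && small_card N #|S|)
    (N.+1)%:R * C * (N%:R ^+ (2 * #|S|))^-1 <= C / 2.
Proof.
have N_ge : 100 <= N%:R :> R by rewrite ler_nat.
set b := (N.+1)%:R * C * (8 / N%:R ^+ 3).
have b_ge0 : 0 <= b by rewrite !mulr_ge0 ?invr_ge0 ?exprn_ge0 ?ler0n.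
rewrite (sum_subsets_by_card [set: 'I_(N + N)] _
  (fun s => (N.+1)%:R * C * (N%:R ^+ (2 * s))^-1)) cardsT card_ord.
apply: le_trans (_ : \sum_(s < (N + N).+1 | small_card N s) b <= _).
  apply: ler_sum => s /andP[s_gt2 _]; rewrite mulrCA; apply: ler_wpM2l.
    by rewrite mulr_ge0 ?ler0n.
  exact: bin_double_div_le.
rewrite sumr_const -[b *+ _]mulr_natl.
apply: le_trans (_ : ((N + N).+1)%:R * b <= _).
  by apply: ler_wpM2r; rewrite // ler_nat (leq_trans (max_card _)) // card_ord.
have N3_pos : 0 < N%:R ^+ 3 :> R by rewrite exprn_gt0 // ltr0n.
have small : ((N + N).+1)%:R * (N.+1)%:R * (8 / N%:R ^+ 3) <= 2^-1 :> R.
  have : (16 * ((N + N).+1 * N.+1) <= N ^ 3)%N by nia.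
  rewrite -(ler_nat R) !natrM => ineq; rewrite mulrA ler_pdivrMr //; lra.
have -> : ((N + N).+1)%:R * b = ((N + N).+1)%:R * (N.+1)%:R * (8 / N%:R ^+ 3) * C.
  by rewrite /b; ring.
by rewrite [C / 2]mulrC; apply: ler_wpM2r; rewrite ?ler0n.
Qed.

Lemma card_not_good_le :
  #|bip_graphs N m :\: good_graphs (1/2 + delta/2) (1/2) c (N + N)|%:R <= C / 2.
Proof.
have c_gt8 : 8 < c by rewrite ltr_pdivlMr // -[X in _ < X]mulr1 ltr_pM2l.
set Bad := _ :\: _.
have cover : Bad \subset \bigcup_(S : vertices | (S \subset [set: 'I_(N + N)]) && small_card N #|S|)
    \bigcup_(T : edges | (T \subset finset.setX S S) && dense_card c #|S| #|T|) supergraphs N m T.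
  apply/fintype.subsetP => E; rewrite finset.in_setD inE => /andP[notgood bipE].
  have [S smallS [T denseT subTE]] := not_good_dense_witness m_floor c_gt8 bipE notgood.
  apply/bigcupP; exists S; first by rewrite finset.subsetT.
  by apply/bigcupP; exists T => //; rewrite inE bipE.
apply: le_trans sum_witness_le.
apply: le_trans (_ : _ <= \sum_(S : vertices | (S \subset [set: 'I_(N + N)]) && small_card N #|S|)
    \sum_(T : edges | (T \subset finset.setX S S) && dense_card c #|S| #|T|)
      #|supergraphs N m T|%:R) _; last first.
  by apply: ler_sum => S /andP[_ /sum_supergraphs_le].
under eq_bigr => S _ do rewrite -natr_sum.
rewrite -natr_sum ler_nat (leq_trans (subset_leq_card cover)) //.
rewrite (leq_trans (card_bigcup_leq _ _)) //.
by apply: leq_sum => S _; apply: card_bigcup_leq.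
Qed.

Lemma card_good_ge :
  C / 2 <= #|good_graphs (1/2 + delta/2) (1/2) c (N + N)|%:R.
Proof.
set G := good_graphs _ _ _ _.
have := cardsID G (bip_graphs N m); rewrite card_bip_graphs => card_split.
have : (#|bip_graphs N m :&: G| <= #|G|)%N by rewrite subset_leq_card ?subsetIr.
rewrite -(ler_nat R); move: card_not_good_le.
by rewrite -card_split natrD; lra.
Qed.

End CountNotGood.

Theorem mainTheorem6 (R : realType) (delta : R) :
  0 < delta -> delta < 1 ->
  let eps : R := 1 / 2 + delta / 2 in
  let eps' : R := 1 / 2 in
  let c : R := 8 / delta in
  exists C : R, 0 < C /\
  exists N : nat, forall n : nat, ~~ odd n -> (N <= n)%N ->
    2 `^ (C * ((n%:R) `^ (2 - eps) * ln (n%:R)))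
      <= (#|good_graphs eps eps' c n|)%:R.
Proof.
move=> delta_gt0 delta_lt1 eps eps' c; exists (1/64); split; first lra.
exists 200%N => n n_even n_ge.
have [N n_def] : exists N, n = (N + N)%N.
  by exists n./2; rewrite addnn -[LHS]odd_double_half (negbTE n_even).
have N_ge100 : (100 <= N)%N by lia.
rewrite {}n_def /eps /eps' /c.
set a := 2 - _.
have [a_ge1 a_le] : 1 <= a /\ a <= 3/2 by rewrite /a; split; lra.
pose m := `|Num.floor (N%:R `^ a)|%N.
have m_floor : m%:Z = Num.floor (N%:R `^ a).
  by rewrite /m abszE ger0_norm // floor_ge0 powR_ge0.
have m_le : (m <= N * N)%N.
  rewrite -(ler_nat R) natrM (le_trans (floor_pow_le m_floor)) //.
  rewrite -expr2 -powR_mulrn ?ler0n // ler_powR ?ler1n //; [lia | lra].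
apply: le_trans (exp2_le_ratio_pow a_ge1 a_le N_ge100 m_floor) _.
apply: le_trans (card_good_ge delta_gt0 delta_lt1 N_ge100 m_floor m_le).
by rewrite ler_pM2r ?invr_gt0 // expr2 -natrM ratio_exp_le_bin.
Qed.
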